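(* Suppose every class $c\in[C]$ uses a revision protocol $\rho^c$ that is either imitative via comparison, excess payoff, or pairwise comparison (different classes may use different families). Let $\mu^\star\in X$ be a rest point of the evolutionary dynamics (E). If $\mu^\star$ is not an MSNE, then $\mu^\star$ is not Lyapunov stable under (E), and no solution of (E) with initial condition $\mu(0)$ in the relative interior of $X$ (i.e. $\mu^c[s,u](0)>0$ for all $c,s,u$) converges to $\mu^\star$.
   Context: Setting. There are $C$ classes of players, $[C]=\{1,\dots,C\}$. For each class $c\in[C]$: $\mathcal S^c$ is a finite state set with $p^c$ elements; for each $s\in\mathcal S^c$, $\mathcal A^c(s)$ is a nonempty finite action set; $\phi^c(\cdot\mid s,a)$ is a probability distribution on $\mathcal S^c$ for each $s\in\mathcal S^c$, $a\in\mathcal A^c(s)$; $\mathcal U^c_D$ is a finite set of $n^c$ deterministic stationary policies, each $u\in\mathcal U^c_D$ assigning to every $s$ a point mass $u(\cdot\mid s)$ on some action of $\mathcal A^c(s)$; $m^c>0$ is the mass of class $c$; $R^c_d>0$ is the state-transition rate. Let $n=\sum_c n^c$. For $u\in\mathcal U^c_D$ put $\phi^{c,u}(s\mid s')=\sum_{a'\in\mathcal A^c(s')}\phi^c(s\mid s',a')u(a'\mid s')$; standing assumption: the Markov chain on $\mathcal S^c$ with kernel $\phi^{c,u}$ has a unique recurrent communicating class, hence a unique stationary distribution $\eta^{c,u}$. The population state is $\mu=(\mu^c)_{c\in[C]}\in X:=\prod_c X^c$, where $X^c=\{\mu^c\in\mathbb R_{\ge0}^{\mathcal S^c\times\mathcal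 U^c_D}:\sum_{s,u}\mu^c[s,u]=m^c\}$; write $\mu^c[\mathcal S^c,u]:=\sum_{s\in\mathcal S^c}\mu^c[s,u]$ and $\mu^c[\mathcal S^c,\cdot]\in\mathbb R^{n^c}_{\ge0}$ for the vector of these. A payoff map $F=(F^c)_{c\in[C]}$ is given, with $F^c$ continuously differentiable on an open neighborhood of $X$ and valued in $\mathbb R^{\mathcal U^c_D}$ ($F^c_u(\mu)$ is the payoff of policy $u$ for class $c$). Each class has a revision protocol $\rho^c=(\rho^c_{uv})_{u,v\in\mathcal U^c_D}$, a Lipschitz continuous map $\mathbb R^{n^c}\times\mathbb R^{n^c}_{\ge0}\to\mathbb R^{n^c\times n^c}_{\ge0}$ whose first argument is a payoff vector and second a policy distribution. The evolutionary dynamics (E) are the ODE on $X$: for all $c\in[C]$, $s\in\mathcal S^c$, $u\in\mathcal U^c_D$, $\dot\mu^c[s,u]=f^{c,d}_{s,u}(\mu)+f^{c,r}_{s,u}(\mu)$, where $f^{c,d}_{s,u}(\mu)=R^c_d\sum_{s'\in\mathcal S^c}\sum_{a'\in\mathcal A^c(s')}\phi^c(s\mid s',a')u(a'\mid s')\mu^c[s',u]-R^c_d\mu^c[s,u]$ and $f^{c,r}_{s,u}(\mu)=\sum_{u'\in\mathcal U^c_D}\mu^c[s,u']\rho^c_{u'u}(F^c(\mu),\mu^c[\mathcal S^c,\cdot])-\mu^c[s,u]\sum_{u'\in\mathcal U^c_D}\rho^c_{uu'}(F^c(\mu),\mu^c[\mathcal S^c,\cdot])$. Solutions from $X$ exist,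 are unique and remain in $X$. A state $\mu\in X$ is a mixed stationary Nash equilibrium (MSNE) if for every $c\in[C]$: (a) for all $u\in\mathcal U^c_D$, $\mu^c[\mathcal S^c,u]>0\Rightarrow F^c_u(\mu)\ge F^c_v(\mu)$ for all $v\in\mathcal U^c_D$; and (b) $f^{c,d}_{s,u}(\mu)=0$ for all $s\in\mathcal S^c,u\in\mathcal U^c_D$. $\mathrm{MSNE}(F,\phi)$ denotes the set of MSNE. Protocol families (for class $c$; $\pi\in\mathbb R^{n^c}$ a payoff vector, $x\in\mathbb R^{n^c}_{\ge0}$ a policy distribution of total mass $m^c$): - imitative: $\rho^c_{uv}(\pi,x)=\frac{x_v}{m^c}r^c_{uv}(\pi,x)$ with $r^c\ge0$ Lipschitz and monotone net conditional imitation rates: for all $u,v,w$, $\pi_v\ge\pi_u\iff r^c_{wv}(\pi,x)-r^c_{vw}(\pi,x)\ge r^c_{wu}(\pi,x)-r^c_{uw}(\pi,x)$; - imitative via comparison: an imitative protocol with $r^c_{uv}(\pi,x)=\varphi^c(\pi_v-\pi_u)$, where $\varphi^c$ is Lipschitz, $\varphi^c(d)=0$ for $d\le0$ and $\varphi^c(d)>0$ for $d>0$; - excess payoff: $\rho^c_{uv}(\pi,x)=\tau^c_v(\hat\pi)$ with $\hat\pi_v=\pi_v-\frac1{m^c}\sum_w x_w\pi_w$, $\tau^c:\mathbb R^{n^c}\to\mathbb R^{n^c}_{\ge0}$ Lipschitz and $\tau^c(\hat\pi)^\top\hat\pi>0$ whenever $\hat\pi$ has a positive component; it is separable if $\tau^c_v(\hat\pi)=\tau^c_v(\hat\pi_v)$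 depends only on $\hat\pi_v$, with $\tau^c_v(d)>0\iff d>0$; - pairwise comparison: $\rho^c_{uv}(\pi,x)=\rho^c_{uv}(\pi)$ independent of $x$, Lipschitz, with $\rho^c_{uv}(\pi)>0\iff\pi_v>\pi_u$; it is impartial if $\rho^c_{uv}(\pi)=\varphi^c_v(\pi_v-\pi_u)$ for some functions $\varphi^c_v$. *)

From HB Require Import structures.
From mathcomp Require Import all_boot all_order all_algebra.
From mathcomp Require Import all_classical all_reals all_analysis.
Unset Printing Implicit Defensive.
Import Order.TTheory GRing.Theory Num.Theory.
Import numFieldNormedType.Exports.
Local Open Scope ring_scope.

Definition SU {C : nat} (St Pol : 'I_C -> finType) (c : 'I_C) : finType :=
  (St c * Pol c)%type.
Definition Idx {C : nat} (St Pol : 'I_C -> finType) : finType :=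
  {c : 'I_C & SU St Pol c}.

(* The data of the model.
   - [phi c s' a s]   is  phi^c(s | s', a);
   - [pol c u s]      is the action prescribed by the deterministic policy u
                      at state s (u(.|s) is the point mass on it);
   - [F c mu u]       is F^c_u(mu), for a population state mu : Idx -> R;
   - [rho c pi x u v] is rho^c_{uv}(pi, x). *)
Record model (R : realType) := Model {
  C : nat;
  St : 'I_C -> finType;
  Pol : 'I_C -> finType;
  Act : forall c, St c -> finType;
  phi : forall c (s' : St c), Act c s' -> St c -> R;
  pol : forall c, Pol c -> forall s : St c, Act c s;
  mass : 'I_C -> R;
  Rd : 'I_C -> R;
  F : forall c, (Idx St Pol -> R) -> Pol c -> R;
  rho : forall c, (Pol c -> R) -> (Pol c -> R) -> Pol c -> Pol c -> R
}.
Arguments C {R} M : rename.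
Arguments St {R} M c : rename.
Arguments Pol {R} M c : rename.
Arguments Act {R M c} s : rename.
Arguments phi {R M c s'} a s : rename.
Arguments pol {R M c} u s : rename.
Arguments mass {R} M c : rename.
Arguments Rd {R} M c : rename.
Arguments F {R} M c mu u : rename.
Arguments rho {R} M c pi x u v : rename.

Section Model.
Context {R : realType} (M : model R).

Definition state := Idx (St M) (Pol M) -> R.

Definition idx {c} (s : St M c) (u : Pol M c) : Idx (St M) (Pol M) :=
  existT (fun c => SU (St M) (Pol M) c) c (s, u).

Definition mu_at (mu : state) {c} (s : St M c) (u : Pol M c) : R := mu (idx s u).

Definition polmass (mu : state) c : Pol M c -> R :=
  fun u => \sum_(s : St M c) mu_at mu s u.

Definition inX (mu : state) : Prop :=
  (forall i, 0 <= mu i) /\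
  (forall c, \sum_(s : St M c) \sum_(u : Pol M c) mu_at mu s u = mass M c).

Definition interiorX (mu : state) : Prop := inX mu /\ forall i, 0 < mu i.

Definition polprob {c} (u : Pol M c) {s' : St M c} (a' : Act s') : R :=
  (a' == pol u s')%:R.

Definition kernel {c} (u : Pol M c) (s' s : St M c) : R :=
  \sum_(a' : Act s') phi a' s * polprob u a'.

Definition fd (mu : state) {c} (s : St M c) (u : Pol M c) : R :=
  Rd M c * (\sum_(s' : St M c) \sum_(a' : Act s')
              phi a' s * polprob u a' * mu_at mu s' u)
  - Rd M c * mu_at mu s u.

Definition fr (mu : state) {c} (s : St M c) (u : Pol M c) : R :=
  \sum_(u' : Pol M c) mu_at mu s u' * rho M c (F M c mu) (polmass mu c) u' u
  - mu_at mu s u * \sum_(u' : Pol M c) rho M c (F M c mu) (polmass mu c) u u'.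

Definition field (mu : state) (i : Idx (St M) (Pol M)) : R :=
  fd mu (tagged i).1 (tagged i).2 + fr mu (tagged i).1 (tagged i).2.

Definition close (mu nu : state) (e : R) : Prop := forall i, `|mu i - nu i| < e.

Definition solution (x : R -> state) : Prop :=
  (forall t : R, 0 <= t -> inX (x t)) /\
  (forall t : R, 0 < t -> forall i, is_derive t (1 : R) (fun r => x r i) (field (x t) i)) /\
  (forall e, 0 < e -> exists d, 0 < d /\
     forall t, 0 <= t -> t < d -> close (x t) (x 0) e).

Definition rest_point (mu : state) : Prop :=
  inX mu /\ forall i, field mu i = 0.

Definition MSNE (mu : state) : Prop :=
  inX mu /\
  forall c,
    (forall u, 0 < polmass mu c u -> forall v, F M c mu v <= F M c mu u) /\
    (forall (s : St M c) (u : Pol M c), fd mu s u = 0).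

Definition lyapunov_stable (mu : state) : Prop :=
  forall e, 0 < e -> exists d, 0 < d /\
    forall x, solution x -> close (x 0) mu d ->
      forall t, 0 <= t -> close (x t) mu e.

Definition converges_to (x : R -> state) (mu : state) : Prop :=
  forall e, 0 < e -> exists T, forall t, T <= t -> close (x t) mu e.

Definition shift (mu : state) (i : Idx (St M) (Pol M)) (h : R) : state :=
  fun j => mu j + h * (j == i)%:R.

Definition partial (G : state -> R) (mu : state) i : R :=
  'D_1 (fun h : R => G (shift mu i h)) 0.

Definition open_set (O : state -> Prop) : Prop :=
  forall mu, O mu -> exists d, 0 < d /\ forall nu, close nu mu d -> O nu.

Definition C1_on (O : state -> Prop) (G : state -> R) : Prop :=
  forall i,
    (forall mu, O mu -> derivable (fun h : R => G (shift mu i h)) 0 1) /\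
    (forall mu, O mu -> forall e, 0 < e -> exists d, 0 < d /\
       forall nu, O nu -> close nu mu d -> `|partial G nu i - partial G mu i| < e).

Definition F_C1_near_X : Prop :=
  exists O, open_set O /\ (forall mu, inX mu -> O mu) /\
    forall c (u : Pol M c), C1_on O (fun mu => F M c mu u).

Definition reach {c} (u : Pol M c) : rel (St M c) :=
  connect [rel s' s | 0 < kernel u s' s].

Definition recurrent {c} (u : Pol M c) (s : St M c) : Prop :=
  forall t, reach u s t -> reach u t s.

Definition unique_recurrent_class {c} (u : Pol M c) : Prop :=
  (exists s, recurrent u s) /\
  forall s t, recurrent u s -> recurrent u t -> reach u s t.

Definition standing : Prop :=
  (forall c (s : St M c), (0 < #|Act s|)%N) /\
  (forall c (s' : St M c) (a : Act s') s, 0 <= phi a s) /\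
  (forall c (s' : St M c) (a : Act s'), \sum_(s : St M c) phi a s = 1) /\
  (forall c (u v : Pol M c), (forall s, pol u s = pol v s) -> u = v) /\
  (forall c, 0 < mass M c) /\
  (forall c, 0 < Rd M c) /\
  (forall c (u : Pol M c), unique_recurrent_class u) /\
  F_C1_near_X.

Definition well_posed : Prop :=
  (forall mu0, inX mu0 -> exists x, solution x /\ x 0 = mu0) /\
  (forall x y, solution x -> solution y -> x 0 = y 0 ->
     forall t, 0 <= t -> x t = y t).

End Model.

Section Protocols.
Context {R : realType} {U : finType}.

Definition nonneg (x : U -> R) : Prop := forall u, 0 <= x u.

Definition l1dist (a b : U -> R) : R := \sum_(u : U) `|a u - b u|.

Definition mat_lipschitz (r : (U -> R) -> (U -> R) -> U -> U -> R) : Prop :=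
  exists L : R, forall pi pi' x x', nonneg x -> nonneg x' -> forall u v,
    `|r pi x u v - r pi' x' u v| <= L * (l1dist pi pi' + l1dist x x').

Definition revision_protocol (rho : (U -> R) -> (U -> R) -> U -> U -> R) : Prop :=
  mat_lipschitz rho /\
  forall pi x, nonneg x -> forall u v, 0 <= rho pi x u v.

Definition pdist (m : R) (x : U -> R) : Prop := nonneg x /\ \sum_(u : U) x u = m.

Definition imitative_with (m : R) (rho r : (U -> R) -> (U -> R) -> U -> U -> R) : Prop :=
  (forall pi x, nonneg x -> forall u v, 0 <= r pi x u v) /\
  mat_lipschitz r /\
  (forall pi x, pdist m x -> forall u v, rho pi x u v = x v / m * r pi x u v) /\
  (forall pi x, pdist m x -> forall u v w,
     pi u <= pi v <-> r pi x w u - r pi x u w <= r pi x w v - r pi x v w).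

Definition imitative (m : R) rho : Prop := exists r, imitative_with m rho r.

Definition real_lipschitz (f : R -> R) : Prop :=
  exists L : R, forall a b, `|f a - f b| <= L * `|a - b|.

Definition imitative_via_comparison (m : R) rho : Prop :=
  exists varphi : R -> R,
    real_lipschitz varphi /\
    (forall d, d <= 0 -> varphi d = 0) /\
    (forall d, 0 < d -> 0 < varphi d) /\
    imitative_with m rho (fun pi _ u v => varphi (pi v - pi u)).

Definition excess_payoff (m : R) (rho : (U -> R) -> (U -> R) -> U -> U -> R) : Prop :=
  exists tau : (U -> R) -> U -> R,
    (exists L : R, forall p q v, `|tau p v - tau q v| <= L * l1dist p q) /\
    (forall p v, 0 <= tau p v) /\
    (forall p, (exists v, 0 < p v) -> 0 < \sum_(v : U) tau p v * p v) /\
    (forall pi x, pdist m x -> forall u v,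
       rho pi x u v = tau (fun w => pi w - (\sum_(w' : U) x w' * pi w') / m) v).

Definition pairwise_comparison (rho : (U -> R) -> (U -> R) -> U -> U -> R) : Prop :=
  (forall pi x y, nonneg x -> nonneg y -> forall u v, rho pi x u v = rho pi y u v) /\
  (forall pi x, nonneg x -> forall u v, 0 < rho pi x u v <-> pi u < pi v).

End Protocols.

(* At a rest point the revision terms of every class carry no net flow between
   policies. For pairwise comparison and excess payoff protocols this forces
   every used policy to be a best response; for imitation via comparison it only
   forces the used policies to earn equal payoffs. In all cases the revision
   terms then vanish state by state, so the drift terms vanish as well, and a
   rest point that is not an MSNE must have an imitative class c with an unused
   policy v that beats the used ones. The mass X of v obeys X' = X h with h
   continuous and positive at the rest point: a solution that stays nearby with
   X > 0 grows linearly and leaves. Moving a little mass onto v shows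
   instability; from the interior X stays positive (X' >= -B X), which rules out
   convergence. *)
From Pilot Require Import Defs.
From HB Require Import structures.
From mathcomp Require Import all_boot all_order all_algebra.
From mathcomp Require Import all_classical all_reals all_analysis.
From mathcomp Require Import ring lra.
Import Order.TTheory GRing.Theory Num.Theory.
Import numFieldNormedType.Exports.
Local Open Scope ring_scope.

Lemma ge0_eq0_or_gt0 {R : numDomainType} {a : R} : 0 <= a -> a = 0 \/ 0 < a.
Proof. by rewrite le0r => /orP[/eqP|]; auto. Qed.

Lemma sum_mul_delta {R : nzSemiRingType} {U : finType} (f : U -> R) (k : U) :
  \sum_w f w * (w == k)%:R = f k.
Proof.
by rewrite (bigD1 k) //= eqxx mulr1 big1 ?addr0 // => w /negbTE ->; rewrite mulr0.
Qed.

Section ModelSums.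
Context {R : realType} (M : model R).

Lemma polprob_sum1 c (u : Pol M c) (s' : St M c) :
  \sum_(a : Act s') polprob M u a = 1.
Proof.
by rewrite (bigD1 (pol u s')) //= /polprob eqxx big1 ?addr0 // => a /negbTE ->.
Qed.

Lemma sum_fd_eq0 (mu : state M) c (u : Pol M c) :
  (forall (s' : St M c) (a : Act s'), \sum_(s : St M c) phi a s = 1) ->
  \sum_(s : St M c) fd M mu s u = 0.
Proof.
move=> phi_sum1; rewrite /fd sumrB -!mulr_sumr; apply/eqP; rewrite subr_eq0.
apply/eqP; congr (_ * _); rewrite exchange_big /=; apply: eq_bigr => s' _.
rewrite exchange_big /=.
transitivity (\sum_(a : Act s') polprob M u a * mu_at M mu s' u).
  by apply: eq_bigr => a _; rewrite -!mulr_suml phi_sum1 mul1r.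
by rewrite -mulr_suml polprob_sum1 mul1r.
Qed.

Lemma sum_fr (mu : state M) c (u : Pol M c) :
  \sum_(s : St M c) fr M mu s u =
  \sum_(u' : Pol M c) polmass M mu c u' * rho M c (F M c mu) (polmass M mu c) u' u
  - polmass M mu c u * \sum_(u' : Pol M c) rho M c (F M c mu) (polmass M mu c) u u'.
Proof.
rewrite /fr sumrB /polmass mulr_suml; congr (_ - _).
by rewrite exchange_big /=; apply: eq_bigr => u' _; rewrite mulr_suml.
Qed.

Lemma sum_field (mu : state M) c (u : Pol M c) :
  (forall (s' : St M c) (a : Act s'), \sum_(s : St M c) phi a s = 1) ->
  \sum_(s : St M c) field M mu (idx M s u) = \sum_(s : St M c) fr M mu s u.
Proof. by move=> phi_sum1; rewrite big_split /= sum_fd_eq0 ?add0r. Qed.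

Lemma polmass_ge0 (mu : state M) c u : inX M mu -> 0 <= polmass M mu c u.
Proof. by move=> [mu_ge0 _]; apply: sumr_ge0 => s _; apply: mu_ge0. Qed.

Lemma mu_at_le_polmass (mu : state M) c (s : St M c) u : inX M mu ->
  mu_at M mu s u <= polmass M mu c u.
Proof.
move=> [mu_ge0 _]; rewrite /polmass (bigD1 s) //= lerDl.
by apply: sumr_ge0 => ? _; apply: mu_ge0.
Qed.

Lemma mu_at_eq0 (mu : state M) c (s : St M c) u : inX M mu ->
  polmass M mu c u = 0 -> mu_at M mu s u = 0.
Proof.
move=> muX pm0; apply/eqP; rewrite eq_le -{1}pm0 mu_at_le_polmass //.
by case: muX => mu_ge0 _; apply: mu_ge0.
Qed.

Lemma polmass_gt0_exists (mu : state M) c u :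
  0 < polmass M mu c u -> exists s, 0 < mu_at M mu s u.
Proof.
move=> pm_gt0; case: (pickP (fun s => 0 < mu_at M mu s u)) => [s|all_le0]; first by exists s.
suff : polmass M mu c u <= 0 by rewrite leNgt pm_gt0.
by apply: sumr_le0 => s _; rewrite leNgt all_le0.
Qed.

Lemma polmass_pdist (mu : state M) c : inX M mu ->
  pdist (mass M c) (polmass M mu c).
Proof.
move=> muX; split=> [u|]; first exact: polmass_ge0.
by case: muX => _ <-; rewrite /polmass exchange_big.
Qed.

Lemma sum_idx_delta c' c (s0 : St M c) (u0 : Pol M c) :
  \sum_(s : St M c') \sum_(u : Pol M c') (idx M s u == idx M s0 u0)%:R =
  (c' == c)%:R :> R.
Proof.
have [e|ne] := eqVneq c' c; last first.
  rewrite big1 // => s _; rewrite big1 // => u _.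
  by case: eqP => // /(congr1 tag) /= e; rewrite e eqxx in ne.
subst c'.
under eq_bigr => s _ do under eq_bigr => u _ do
  rewrite (@eq_Tagged _ (fun c => SU (St M) (Pol M) c) (idx M s u) (s0, u0)) /=.
rewrite (bigD1 s0) //= [X in _ + X]big1 ?addr0; last first.
  by move=> s /negbTE hs; apply: big1 => u _; rewrite xpair_eqE hs.
rewrite (bigD1 u0) //= xpair_eqE !eqxx [X in _ + X]big1 ?addr0 //.
by move=> u /negbTE hu; rewrite xpair_eqE eqxx hu.
Qed.

End ModelSums.

Section Comparison.
Context {R : realType} {U : finType} (vp : R -> R).
Hypothesis vp_le0 : forall d, d <= 0 -> vp d = 0.
Hypothesis vp_gt0 : forall d, 0 < d -> 0 < vp d.

Lemma vp_ge0 d : 0 <= vp d.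
Proof. by case: (leP d 0) => [/vp_le0 ->|/vp_gt0/ltW]. Qed.

Definition net_imitation (x pi : U -> R) (v : U) : R :=
  \sum_u x u * (vp (pi v - pi u) - vp (pi u - pi v)).

Lemma net_imitation_term_ge0 (x pi : U -> R) v u :
  0 <= x u -> pi u <= pi v -> 0 <= x u * (vp (pi v - pi u) - vp (pi u - pi v)).
Proof.
move=> xu_ge0 le_uv; rewrite (vp_le0 (pi u - pi v)) ?subr_le0 // subr0.
by rewrite mulr_ge0 ?vp_ge0.
Qed.

Lemma net_imitation_gt0 (x pi : U -> R) v u0 :
  (forall u, 0 <= x u) -> (forall u, pi u <= pi v) ->
  0 < x u0 -> pi u0 < pi v -> 0 < net_imitation x pi v.
Proof.
move=> x_ge0 v_max xu0 lt_u0v; rewrite /net_imitation (bigD1 u0) //=.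
apply: ltr_pwDl; last by apply: sumr_ge0 => u _; apply: net_imitation_term_ge0.
rewrite (vp_le0 (pi u0 - pi v)) ?subr_le0 ?(ltW lt_u0v) // subr0.
by rewrite mulr_gt0 ?vp_gt0 ?subr_gt0.
Qed.

Lemma imitative_agg_flow (m : R) (x pi : U -> R) (rh : U -> U -> R) u :
  (forall u' w, rh u' w = x w / m * vp (pi w - pi u')) ->
  \sum_u' x u' * rh u' u - x u * \sum_u' rh u u' = x u / m * net_imitation x pi u.
Proof.
move=> rhE; rewrite /net_imitation !mulr_sumr -sumrB.
by apply: eq_bigr => u' _; rewrite !rhE; ring.
Qed.

End Comparison.

Lemma sum_mul_bump {R : realType} {U : finType} (t p : U -> R) (ep dl : R) (j k : U) :
  \sum_v t v * (p v + ep * (v == k)%:R - dl * (v == j)%:R) =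
  \sum_v t v * p v + ep * t k - dl * t j.
Proof.
under eq_bigr do rewrite mulrBr mulrDr.
rewrite sumrB big_split /=; congr (_ + _ - _);
  by under eq_bigr do rewrite mulrCA; rewrite -mulr_sumr sum_mul_delta.
Qed.

Lemma l1dist_bump {R : realType} {U : finType} (p : U -> R) (ep dl : R) (j k : U) :
  0 <= ep -> 0 <= dl ->
  l1dist (fun w => p w + ep * (w == k)%:R - dl * (w == j)%:R) p <= ep + dl.
Proof.
move=> ep_ge0 dl_ge0; rewrite /l1dist.
have diffE w : p w + ep * (w == k)%:R - dl * (w == j)%:R - p w =
    ep * (w == k)%:R - dl * (w == j)%:R by ring.
under eq_bigr do rewrite diffE.
apply: le_trans (ler_sum _ (fun w _ => ler_normB _ _)) _; rewrite big_split /=.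
by apply: lerD; under eq_bigr do rewrite normrM normr_nat ger0_norm //;
  rewrite sum_mul_delta.
Qed.

Section ExcessPayoffRates.
Context {R : realType} {U : finType} {tau : (U -> R) -> U -> R} {L : R}.
Hypothesis tau_lipschitz : forall p q v, `|tau p v - tau q v| <= L * l1dist p q.
Hypothesis tau_ge0 : forall p v, 0 <= tau p v.
Hypothesis tau_acute : forall p, (exists v, 0 < p v) -> 0 < \sum_v tau p v * p v.

(* Lower p a lot at j and raise it slightly at k: by Lipschitz continuity tau
   hardly moves, so the acuteness sum becomes roughly [ep * tau p k - dl * tau p j < 0]
   although the perturbed vector is positive at k. *)
Lemma tau_gt0_unique (p : U -> R) j k : (forall w, p w <= 0) -> p k = 0 ->
  0 < tau p j -> 0 < tau p k -> j = k.
Proof.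
move=> p_le0 pk0 a_gt0 b_gt0; apply/eqP/negPn/negP => neq_jk.
set a := tau p j in a_gt0; set b := tau p k in b_gt0.
set L' := `|L| + 1; have L'_gt0 : 0 < L' by rewrite ltr_wpDl.
set dl := a / (4 * L'); set ep := dl * a / (4 * (a + b)).
have dl_gt0 : 0 < dl by apply: divr_gt0; [| lra].
have ep_gt0 : 0 < ep by apply: divr_gt0; [apply: mulr_gt0 | lra].
set q := fun w => p w + ep * (w == k)%:R - dl * (w == j)%:R.
have qk : q k = ep by rewrite /q pk0 eqxx eq_sym (negbTE neq_jk) mulr0 subr0 add0r mulr1.
have acute_q : 0 < \sum_v tau q v * q v by apply: tau_acute; exists k; rewrite qk.
rewrite sum_mul_bump in acute_q.
have tq_p_le0 : \sum_v tau q v * p v <= 0.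
  by apply: sumr_le0 => v _; apply: mulr_ge0_le0.
have near_p w : `|tau q w - tau p w| <= L' * (ep + dl).
  apply: le_trans (tau_lipschitz q p w) _.
  have d_ge0 : 0 <= l1dist q p by apply: sumr_ge0.
  apply: le_trans (_ : L' * l1dist q p <= _).
    by rewrite ler_wpM2r // (le_trans (ler_norm L)) // lerDl.
  by rewrite ler_wpM2l ?(ltW L'_gt0) // l1dist_bump // ltW.
have /ler_normlP [hk1 hk2] := near_p k.
have /ler_normlP [hj1 hj2] := near_p j.
rewrite -/a -/b in hk1 hk2 hj1 hj2.
have f1 : 4 * L' * dl = a by rewrite /dl; field; apply/eqP; lra.
have f2 : 4 * (a + b) * ep = dl * a by rewrite /ep; field; apply/eqP; lra.
have f3 : 4 * ep <= dl.
  have : 4 * (a + b) * ep <= dl * (a + b) by rewrite f2; nra.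
  by move=> h; nra.
have f4 : L' * (ep + dl) <= 5 / 16 * a by nra.
have f5 : ep * tau q k <= dl * a / 4.
  have : ep * tau q k <= ep * (a + b) by rewrite ler_pM2l //; lra.
  by move=> h; nra.
have f6 : dl * (11 / 16 * a) <= dl * tau q j by rewrite ler_pM2l //; lra.
nra.
Qed.

End ExcessPayoffRates.

(* One class at a state with vanishing aggregate revision flow: [x] is the
   policy distribution, [mu s] its part in state [s], [rh] the revision rates. *)
Section RestingRevisionFlow.
Context {R : realType} {S U : finType} {m : R} {mu : S -> U -> R}
  {x pi : U -> R} {rh : U -> U -> R}.
Hypothesis m_gt0 : 0 < m.
Hypothesis mu_ge0 : forall s u, 0 <= mu s u.
Hypothesis mu_le_x : forall s u, mu s u <= x u.
Hypothesis x_ge0 : forall u, 0 <= x u.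
Hypothesis x_sum : \sum_u x u = m.
Hypothesis agg_flow_eq0 : forall u,
  \sum_u' x u' * rh u' u - x u * \sum_u' rh u u' = 0.

Definition revision_flow s u :=
  \sum_u' mu s u' * rh u' u - mu s u * \sum_u' rh u u'.

Lemma mu_eq0 s u : x u = 0 -> mu s u = 0.
Proof. by move=> xu0; apply/eqP; rewrite eq_le mu_ge0 -xu0 mu_le_x. Qed.

Lemma revision_flow_eq0 :
  (forall u u', u != u' -> 0 < x u -> rh u u' = 0) -> forall s u, revision_flow s u = 0.
Proof.
move=> rh_off s u.
have term_eq0 w w' : w != w' -> mu s w * rh w w' = 0.
  move=> neq; have [/(mu_eq0 s) ->|xw] := ge0_eq0_or_gt0 (x_ge0 w); first by rewrite mul0r.
  by rewrite rh_off ?mulr0.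
rewrite /revision_flow mulr_sumr -sumrB big1 // => u' _.
have [->|neq] := eqVneq u' u; first by rewrite subrr.
by rewrite !term_eq0 ?subrr // eq_sym.
Qed.

Lemma pairwise_rest :
  (forall u v, 0 <= rh u v) -> (forall u v, 0 < rh u v <-> pi u < pi v) ->
  (forall u, 0 < x u -> forall v, pi v <= pi u) /\ (forall s u, revision_flow s u = 0).
Proof.
move=> rh_ge0 rh_gt0.
have rh_eq0 u v : pi v <= pi u -> rh u v = 0.
  move=> le_vu; apply/eqP; rewrite eq_le rh_ge0 andbT leNgt; apply/negP.
  by move=> /rh_gt0; rewrite ltNge le_vu.
have nash u : 0 < x u -> forall v, pi v <= pi u.
  move=> xu v; rewrite leNgt; apply/negP => lt_uv.
  have [w xw w_min] := @arg_minP _ _ _ u (fun i => 0 < x i) pi xu.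
  have inflow0 : \sum_u' x u' * rh u' w = 0.
    apply: big1 => u' _; have [->|xu'] := ge0_eq0_or_gt0 (x_ge0 u'); first by rewrite mul0r.
    by rewrite rh_eq0 ?mulr0 ?w_min.
  have := agg_flow_eq0 w; rewrite inflow0 sub0r => /eqP; rewrite oppr_eq0 mulf_eq0.
  rewrite (gt_eqF xw) /= => /eqP out0.
  have /eqP := psumr_eq0P (fun i _ => rh_ge0 w i) out0 (i := v) isT.
  by rewrite gt_eqF // rh_gt0 (le_lt_trans (w_min u xu)).
split=> //; apply: revision_flow_eq0 => u u' _ xu.
exact/rh_eq0/nash.
Qed.

Lemma imitative_rest (vp : R -> R) :
  (forall d, d <= 0 -> vp d = 0) -> (forall d, 0 < d -> 0 < vp d) ->
  (forall u' u, rh u' u = x u / m * vp (pi u - pi u')) ->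
  (forall u u', 0 < x u -> 0 < x u' -> pi u = pi u') /\
  (forall s u, revision_flow s u = 0).
Proof.
move=> vp_le0 vp_gt0 rhE.
have [u0 xu0] : exists u, 0 < x u.
  case: (pickP (fun u => 0 < x u)) => [u xu|xs_le0]; first by exists u.
  suff : \sum_u x u <= 0 by rewrite x_sum leNgt m_gt0.
  by apply: sumr_le0 => u _; rewrite leNgt xs_le0.
have [w xw w_max] := @arg_maxP _ _ _ u0 (fun i => 0 < x i) pi xu0.
have {}w_max j : 0 < x j -> pi j <= pi w by exact: w_max.
have eq_max u : 0 < x u -> pi u = pi w.
  move=> xu; apply/eqP; rewrite eq_le w_max //=.
  have := agg_flow_eq0 w; rewrite (imitative_agg_flow vp m x pi) // => /eqP.
  rewrite mulf_eq0 mulf_eq0 invr_eq0 (gt_eqF xw) (gt_eqF m_gt0) /= => /eqP net0.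
  have terms_ge0 u' : predT u' -> 0 <= x u' * (vp (pi w - pi u') - vp (pi u' - pi w)).
    move=> _; have [->|xu'] := ge0_eq0_or_gt0 (x_ge0 u'); first by rewrite mul0r.
    by apply: (@net_imitation_term_ge0 _ _ vp vp_le0 vp_gt0) => //; apply: w_max.
  have /eqP := psumr_eq0P terms_ge0 net0 isT (i := u).
  rewrite mulf_eq0 (gt_eqF xu) /= (vp_le0 (pi u - pi w)) ?subr_le0 ?w_max // subr0.
  by apply: contraLR; rewrite -ltNge -subr_gt0 => /vp_gt0/gt_eqF ->.
split=> [u u' xu xu'|]; first by rewrite !eq_max.
apply: revision_flow_eq0 => u u' _ xu; rewrite rhE.
have [->|xu'] := ge0_eq0_or_gt0 (x_ge0 u'); first by rewrite mul0r mul0r.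
by rewrite (eq_max u) // (eq_max u') // subrr vp_le0 // mulr0.
Qed.

Lemma excess_rest {tau : (U -> R) -> U -> R} {L : R} :
  (forall p q v, `|tau p v - tau q v| <= L * l1dist p q) ->
  (forall p v, 0 <= tau p v) ->
  (forall p, (exists v, 0 < p v) -> 0 < \sum_v tau p v * p v) ->
  (forall u v, rh u v = tau (fun w => pi w - (\sum_w' x w' * pi w') / m) v) ->
  (forall u, 0 < x u -> forall v, pi v <= pi u) /\ (forall s u, revision_flow s u = 0).
Proof.
move=> tau_lip tau_ge0 tau_acute rhE.
set p := fun w => pi w - (\sum_w' x w' * pi w') / m.
set T := \sum_v tau p v.
have {}rhE : rh = fun _ v => tau p v by apply/funext => u; apply/funext => v; apply: rhE.
have mass_tau u : m * tau p u = x u * T.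
  have := agg_flow_eq0 u; rewrite rhE -mulr_suml x_sum => /eqP.
  by rewrite subr_eq0 mulrC => /eqP.
have mean_p0 : \sum_u x u * p u = 0.
  rewrite /p; under eq_bigr do rewrite mulrBr.
  by rewrite sumrB -mulr_suml x_sum mulrC divfK ?subrr // gt_eqF.
have p_le0 w : p w <= 0.
  rewrite leNgt; apply/negP => pw.
  suff : \sum_v tau p v * p v = 0 by move/eqP; rewrite gt_eqF // tau_acute //; exists w.
  apply: (mulfI (negbT (gt_eqF m_gt0))); rewrite mulr0 mulr_sumr.
  under eq_bigr do rewrite mulrA mass_tau mulrAC.
  by rewrite -mulr_suml mean_p0 mul0r.
have p_used u : 0 < x u -> p u = 0.
  move=> xu; have terms_ge0 u' : predT u' -> 0 <= - (x u' * p u').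
    by move=> _; rewrite oppr_ge0 mulr_ge0_le0.
  have sum0 : \sum_u' - (x u' * p u') = 0 by rewrite sumrN mean_p0 oppr0.
  have /eqP := psumr_eq0P terms_ge0 sum0 isT (i := u).
  by rewrite oppr_eq0 mulf_eq0 (gt_eqF xu) => /eqP.
split=> [u xu v|].
  by have := p_le0 v; rewrite -(p_used u xu) /p lerD2r.
apply: revision_flow_eq0 => u u' neq xu; rewrite rhE.
apply/eqP; rewrite eq_le tau_ge0 andbT leNgt; apply/negP => tau_u'.
have T_gt0 : 0 < T by rewrite /T (bigD1 u') //= ltr_pwDl // sumr_ge0.
have tau_u : 0 < tau p u by rewrite -(pmulr_rgt0 _ m_gt0) mass_tau mulr_gt0.
have := tau_gt0_unique tau_lip tau_ge0 tau_acute p u' u p_le0 (p_used u xu) tau_u' tau_u.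
by move/eqP: neq => /[swap] ->.
Qed.

End RestingRevisionFlow.

Lemma better_unused_policy {R : realType} {U : finType} {x pi : U -> R} :
  (forall u, 0 <= x u) -> (forall u u', 0 < x u -> 0 < x u' -> pi u = pi u') ->
  ~ (forall u, 0 < x u -> forall v, pi v <= pi u) ->
  exists v u0, [/\ x v = 0, 0 < x u0, pi u0 < pi v & forall u, pi u <= pi v].
Proof.
move=> x_ge0 eq_used not_nash.
have [u0 xu0 /existsNP[w /negP]] : exists2 u, 0 < x u & ~ forall v, pi v <= pi u.
  by apply/existsPNP => nash; apply: not_nash => u /nash.
rewrite -ltNge => lt_u0w.
have [v _ v_max] := @arg_maxP _ _ _ u0 predT pi isT.
have {}v_max u : pi u <= pi v by exact: v_max.
exists v, u0; split=> //; last exact: lt_le_trans lt_u0w (v_max w).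
have [//|xv] := ge0_eq0_or_gt0 (x_ge0 v).
by have := v_max w; rewrite -(eq_used _ _ xu0 xv) leNgt lt_u0w.
Qed.

Section RealDerivatives.
Context {R : realType}.
Local Open Scope classical_set_scope.

Lemma MVT_closed {f df : R -> R} {a b : R} : a <= b ->
  (forall t, a <= t <= b -> is_derive t 1 f (df t)) ->
  exists2 c, a <= c <= b & f b - f a = df c * (b - a).
Proof.
move=> le_ab f_df.
have f_cont : {within `[a, b], continuous f}.
  apply: derivable_within_continuous => t; rewrite in_itv /= => t_ab.
  by have [] := f_df t t_ab.
have f_df' t : t \in `]a, b[%R -> is_derive t 1 f (df t).
  by rewrite in_itv /= => /andP[a_t t_b]; apply: f_df; rewrite !ltW.
have [c] := MVT_segment le_ab f_df' f_cont.
by rewrite in_itv /= => c_ab ->; exists c.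
Qed.

Lemma increment_ge (f df : R -> R) (a b L : R) : a <= b ->
  (forall t, a <= t <= b -> is_derive t 1 f (df t)) ->
  (forall t, a <= t <= b -> L <= df t) -> L * (b - a) <= f b - f a.
Proof.
move=> le_ab f_df L_le; have [c c_ab ->] := MVT_closed le_ab f_df.
by rewrite ler_wpM2r ?subr_ge0 ?L_le.
Qed.

Lemma norm_increment_le (f : R -> R) (a b P : R) : a <= b ->
  (forall t, a <= t <= b -> derivable f t 1 /\ `|'D_1 f t| <= P) ->
  `|f b - f a| <= P * (b - a).
Proof.
move=> le_ab f_bnd; have [|c c_ab ->] := @MVT_closed f ('D_1 f) a b le_ab.
  by move=> t t_ab; apply/derivableP; case: (f_bnd t t_ab).
have ba_ge0 : 0 <= b - a by rewrite subr_ge0.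
by rewrite normrM (ger0_norm ba_ge0) ler_wpM2r //; case: (f_bnd c c_ab).
Qed.

Lemma norm_increment0_le (f : R -> R) (D P : R) :
  (forall h, `|h| <= `|D| -> derivable f h 1 /\ `|'D_1 f h| <= P) ->
  `|f D - f 0| <= P * `|D|.
Proof.
move=> f_bnd; case: (leP 0 D) => D0.
  rewrite (ger0_norm D0) -[X in P * X]subr0; apply: norm_increment_le => // h /andP[h0 hD].
  by apply: f_bnd; rewrite (ger0_norm D0) (ger0_norm h0).
rewrite distrC (ltr0_norm D0) -[X in P * X]sub0r; apply: norm_increment_le; first exact: ltW.
move=> h /andP[Dh h0]; apply: f_bnd; rewrite (ltr0_norm D0) ler_norml.
by apply/andP; split; lra.
Qed.

Lemma is_derive_big {I : Type} {r : seq I} {f : I -> R -> R} {df : I -> R} {t : R} :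
  (forall i, is_derive t (1 : R) (f i) (df i)) ->
  is_derive t (1 : R) (fun y => \sum_(i <- r) f i y) (\sum_(i <- r) df i).
Proof.
move=> f_df; elim: r => [|i r IH].
  by under [fun y => _]funext do rewrite big_nil; rewrite big_nil; apply: is_derive_cst.
under [fun y => _]funext do rewrite big_cons.
by rewrite big_cons; apply: is_deriveD.
Qed.

Lemma derivable_translate (G : R -> R) (h : R) :
  derivable (fun k => G (k + h)) 0 1 -> derivable G h 1.
Proof. by rewrite /derivable; under [fun t => _]funext do rewrite /= addr0 add0r. Qed.

Lemma derive_translate (G : R -> R) (h : R) :
  'D_1 (fun k => G (k + h)) 0 = 'D_1 G h.
Proof. by rewrite /derive; under [fun t => _]funext do rewrite /= addr0 add0r. Qed.

End RealDerivatives.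

Section ContinuityAtState.
Context {R : realType} {M : model R}.
Implicit Types (mu nu : state M) (G : state M -> R).

Definition cont_at G mu := forall e : R, 0 < e -> exists2 d : R, 0 < d &
  forall nu, Defs.close M nu mu d -> `|G nu - G mu| < e.

Lemma close_le {nu mu : state M} {d d' : R} :
  d <= d' -> Defs.close M nu mu d -> Defs.close M nu mu d'.
Proof. by move=> le_dd' nu_mu i; apply: lt_le_trans (nu_mu i) le_dd'. Qed.

Lemma close_min nu mu d1 d2 :
  Defs.close M nu mu (Num.min d1 d2) -> Defs.close M nu mu d1 /\ Defs.close M nu mu d2.
Proof. by move=> nu_mu; split=> i; have := nu_mu i; rewrite lt_min => /andP[]. Qed.

Lemma cont_at_cst (a : R) mu : cont_at (fun=> a) mu.
Proof. by move=> e e_gt0; exists 1 => // nu _; rewrite subrr normr0. Qed.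

Lemma cont_at_coord i mu : cont_at (fun nu => nu i) mu.
Proof. by move=> e e_gt0; exists e => // nu; apply. Qed.

Lemma cont_at_add G1 G2 mu : cont_at G1 mu -> cont_at G2 mu ->
  cont_at (fun nu => G1 nu + G2 nu) mu.
Proof.
move=> G1_cont G2_cont e e_gt0; have e2_gt0 : 0 < e / 2 by rewrite divr_gt0.
have [d1 d1_gt0 G1_d1] := G1_cont _ e2_gt0; have [d2 d2_gt0 G2_d2] := G2_cont _ e2_gt0.
exists (Num.min d1 d2) => [|nu /close_min[nu_d1 nu_d2]]; first by rewrite lt_min d1_gt0.
have := G1_d1 _ nu_d1; have := G2_d2 _ nu_d2.
have -> : G1 nu + G2 nu - (G1 mu + G2 mu) = (G1 nu - G1 mu) + (G2 nu - G2 mu) by ring.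
by have := ler_normD (G1 nu - G1 mu) (G2 nu - G2 mu); lra.
Qed.

Lemma cont_at_lipschitz (f : R -> R) (K : R) G mu :
  (forall a b, `|f a - f b| <= K * `|a - b|) -> cont_at G mu ->
  cont_at (fun nu => f (G nu)) mu.
Proof.
move=> f_lip G_cont e e_gt0; set K' := `|K| + 1.
have K'_gt0 : 0 < K' by rewrite ltr_wpDl.
have [d d_gt0 G_d] := G_cont _ (divr_gt0 e_gt0 K'_gt0); exists d => // nu nu_mu.
have le_K : K * `|G nu - G mu| <= K' * `|G nu - G mu|.
  by rewrite ler_wpM2r // (le_trans (ler_norm K)) // lerDl.
apply: le_lt_trans (f_lip _ _) (le_lt_trans le_K _).
by move: (G_d _ nu_mu); rewrite ltr_pdivlMr // mulrC.
Qed.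

Lemma cont_at_sub G1 G2 mu : cont_at G1 mu -> cont_at G2 mu ->
  cont_at (fun nu => G1 nu - G2 nu) mu.
Proof.
move=> G1_cont G2_cont; apply: cont_at_add G1_cont _.
by apply: (cont_at_lipschitz (fun z => - z) 1) G2_cont => a b; rewrite mul1r -opprD normrN.
Qed.

Lemma cont_at_mul G1 G2 mu : cont_at G1 mu -> cont_at G2 mu ->
  cont_at (fun nu => G1 nu * G2 nu) mu.
Proof.
move=> G1_cont G2_cont e e_gt0.
set A := `|G1 mu|; set B := `|G2 mu|.
have A_ge0 : 0 <= A := normr_ge0 _; have B_ge0 : 0 <= B := normr_ge0 _.
set eta := Num.min 1 (e / (2 * (1 + A + B))).
have eta_gt0 : 0 < eta by rewrite lt_min ltr01 divr_gt0 //; lra.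
have eta_le1 : eta <= 1 by rewrite ge_min lexx.
have eta_AB : eta * (1 + A + B) <= e / 2.
  have : eta <= e / (2 * (1 + A + B)) by rewrite ge_min lexx orbT.
  by rewrite ler_pdivlMr ?ler_pdivlMr //; lra.
have [d1 d1_gt0 G1_d1] := G1_cont _ eta_gt0; have [d2 d2_gt0 G2_d2] := G2_cont _ eta_gt0.
exists (Num.min d1 d2) => [|nu /close_min[nu_d1 nu_d2]]; first by rewrite lt_min d1_gt0.
have a_lt := G1_d1 _ nu_d1; have b_lt := G2_d2 _ nu_d2.
set a := G1 nu - G1 mu in a_lt; set b := G2 nu - G2 mu in b_lt.
have -> : G1 nu * G2 nu - G1 mu * G2 mu = a * b + G1 mu * b + G2 mu * a by rewrite /a /b; ring.
have ab_le : `|a * b| <= eta by rewrite normrM; have := normr_ge0 a; nra.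
have Ab_le : `|G1 mu * b| <= A * eta by rewrite normrM ler_wpM2l // ltW.
have Ba_le : `|G2 mu * a| <= B * eta by rewrite normrM ler_wpM2l // ltW.
have := ler_normD (a * b + G1 mu * b) (G2 mu * a).
have := ler_normD (a * b) (G1 mu * b); lra.
Qed.

Lemma cont_at_sum (I : Type) (r : seq I) (G : I -> state M -> R) mu :
  (forall i, cont_at (G i) mu) -> cont_at (fun nu => \sum_(i <- r) G i nu) mu.
Proof.
move=> G_cont; elim: r => [|i r IH].
  by under [fun nu => _]funext do rewrite big_nil; apply: cont_at_cst.
by under [fun nu => _]funext do rewrite big_cons; apply: cont_at_add.
Qed.

Lemma shift0 mu i : Defs.shift M mu i 0 = mu.
Proof. by apply/funext => j; rewrite /Defs.shift mul0r addr0. Qed.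

Lemma shift_shift mu i h k :
  Defs.shift M (Defs.shift M mu i h) i k = Defs.shift M mu i (k + h).
Proof. by apply/funext => j; rewrite /Defs.shift; ring. Qed.

End ContinuityAtState.

(* A C^1 function is locally Lipschitz: move from mu to nu one coordinate at a
   time and apply the mean value theorem along each coordinate. *)
Section C1Continuity.
Context {R : realType} (M : model R) (O : state M -> Prop) (G : state M -> R) (mu : state M).
Hypotheses (O_open : open_set M O) (O_mu : O mu) (G_C1 : C1_on M O G).

Let bnd i := `|partial M G mu i| + 1.

Lemma C1_partial_bounded : exists2 D : R, 0 < D &
  forall nu, Defs.close M nu mu D -> O nu /\ forall i, `|partial M G nu i| <= bnd i.
Proof.
have [d0 [d0_gt0 d0_O]] := O_open mu O_mu.
have /choice[dd dd_spec] i : exists d : R, 0 < d /\ forall nu, O nu ->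
    Defs.close M nu mu d -> `|partial M G nu i - partial M G mu i| < 1.
  by apply: (proj2 (G_C1 i)).
set D := \big[Num.min/d0]_i dd i.
have D_gt0 : 0 < D by apply/bigmin_gtP; split=> // i _; case: (dd_spec i).
exists D => // nu nu_mu.
have nu_in_O : O nu by apply: d0_O; apply: close_le nu_mu; apply: bigmin_le_id.
split=> // i; have := proj2 (dd_spec i) nu nu_in_O (close_le (bigmin_le _ i _) nu_mu).
have := ler_normD (partial M G mu i) (partial M G nu i - partial M G mu i).
by rewrite addrC subrK /bnd; lra.
Qed.

Lemma C1_shift_increment (D : R) :
  (forall nu, Defs.close M nu mu D -> O nu /\ forall i, `|partial M G nu i| <= bnd i) ->
  forall p i h, (forall k, `|k| <= `|h| -> Defs.close M (Defs.shift M p i k) mu D) ->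
  `|G (Defs.shift M p i h) - G p| <= bnd i * `|h|.
Proof.
move=> D_bnd p i h seg_close; rewrite -[G p](congr1 G (shift0 p i)).
apply: (norm_increment0_le (fun k => G (Defs.shift M p i k))) => k k_le.
have [pk_in_O pk_bnd] := D_bnd _ (seg_close k k_le).
have shiftE : (fun k' => G (Defs.shift M (Defs.shift M p i k) i k')) =
    (fun k' => G (Defs.shift M p i (k' + k))).
  by apply/funext => k'; rewrite shift_shift.
split; first by apply: derivable_translate; rewrite -shiftE; apply: (proj1 (G_C1 i)).
by rewrite -derive_translate -shiftE; apply: pk_bnd.
Qed.

Lemma C1_local_lipschitz : exists2 D : R, 0 < D & forall nu, Defs.close M nu mu D ->
  `|G nu - G mu| <= \sum_(i <- enum (Idx (St M) (Pol M))) bnd i * `|nu i - mu i|.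
Proof.
have [D D_gt0 D_bnd] := C1_partial_bounded; exists D => // nu nu_mu.
pose mix (l : seq (Idx (St M) (Pol M))) : state M := fun j => if j \in l then nu j else mu j.
suff mix_le (l : seq (Idx (St M) (Pol M))) :
    uniq l -> `|G (mix l) - G mu| <= \sum_(i <- l) bnd i * `|nu i - mu i|.
  have mix_all : mix (enum (Idx (St M) (Pol M))) = nu.
    by apply/funext => j; rewrite /mix mem_enum.
  by rewrite -{1}mix_all; apply/mix_le/enum_uniq.
elim: l => [_|i l IH /= /andP[i_l l_uniq]].
  by rewrite big_nil (_ : mix [::] = mu) ?subrr ?normr0.
have mixE : mix (i :: l) = Defs.shift M (mix l) i (nu i - mu i).
  apply/funext => j; rewrite /Defs.shift /mix in_cons.
  have [->|ji] /= := eqVneq j i; last by rewrite mulr0 addr0.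
  by rewrite (negbTE i_l) mulr1 addrC subrK.
rewrite big_cons mixE; apply: le_trans (ler_distD (G (mix l)) _ _) _.
apply: lerD (IH l_uniq); apply: C1_shift_increment D_bnd _ _ _ _ => k k_le j.
rewrite /Defs.shift /mix; have [->|ji] := eqVneq j i.
  by rewrite (negbTE i_l) mulr1 addrC addKr (le_lt_trans k_le).
by rewrite mulr0 addr0; case: (j \in l); rewrite ?subrr ?normr0.
Qed.

Lemma C1_cont_at : cont_at G mu.
Proof.
have [D D_gt0 G_lip] := C1_local_lipschitz.
set S := \sum_(i <- enum (Idx (St M) (Pol M))) bnd i.
have S_ge0 : 0 <= S by apply: sumr_ge0 => i _; rewrite /bnd addr_ge0.
move=> e e_gt0; have eS_gt0 : 0 < e / (S + 1) by rewrite divr_gt0 //; lra.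
exists (Num.min D (e / (S + 1))) => [|nu /close_min[nu_D nu_e]]; first by rewrite lt_min D_gt0.
apply: le_lt_trans (G_lip _ nu_D) (le_lt_trans (_ : _ <= S * (e / (S + 1))) _).
  rewrite /S mulr_suml; apply: ler_sum => i _; rewrite ler_wpM2l ?addr_ge0 //.
  exact/ltW/nu_e.
by rewrite mulrA ltr_pdivrMr; nra.
Qed.

End C1Continuity.

Section RestPoints.
Context {R : realType} (M : model R).
Hypothesis st : standing M.

Definition nash_class (mu : state M) c := forall u : Pol M c,
  0 < polmass M mu c u -> forall v, F M c mu v <= F M c mu u.

Lemma mass_gt0 c : 0 < mass M c.
Proof. by case: st => _ [_ [_ [_ [mass_gt0 _]]]]; apply: mass_gt0. Qed.

Lemma phi_sum1 c (s' : St M c) (a : Act s') : \sum_(s : St M c) phi a s = 1.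
Proof. by case: st => _ [_ [phi_sum1 _]]; apply: phi_sum1. Qed.

(* At a rest point the drift terms sum to zero over states, so the aggregate
   revision flow of each policy vanishes. *)
Lemma rest_point_class (mu : state M) c : revision_protocol (rho M c) ->
  imitative_via_comparison (mass M c) (rho M c) \/
  excess_payoff (mass M c) (rho M c) \/ pairwise_comparison (rho M c) ->
  rest_point M mu ->
  (forall (s : St M c) (u : Pol M c), fr M mu s u = 0) /\
  (nash_class mu c \/ imitative_via_comparison (mass M c) (rho M c) /\
     forall u u', 0 < polmass M mu c u -> 0 < polmass M mu c u' ->
        F M c mu u = F M c mu u').
Proof.
move=> [_ rho_ge0] family [muX field0].
have [x_ge0 x_sum] := polmass_pdist M mu c muX.
have agg_flow_eq0 u : \sum_u' polmass M mu c u' *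
      rho M c (F M c mu) (polmass M mu c) u' u -
    polmass M mu c u * \sum_u' rho M c (F M c mu) (polmass M mu c) u u' = 0.
  by rewrite -sum_fr -sum_field; [apply: big1 => s _; apply: field0 | apply: phi_sum1].
have mu_ge0 (s : St M c) u : 0 <= mu_at M mu s u by case: muX => mu_ge0 _; apply: mu_ge0.
have mu_le (s : St M c) u := mu_at_le_polmass M mu c s u muX.
case: family => [imit|[[tau [[L tau_lip] [tau_ge0 [tau_acute rhoE]]]]|[_ rho_gt0]]].
- have [vp [_ [vp_le0 [vp_gt0 [_ [_ [rhoE _]]]]]]] := imit.
  have [eq_used flow0] := imitative_rest (mass_gt0 c) mu_ge0 mu_le x_ge0 x_sum
    agg_flow_eq0 vp vp_le0 vp_gt0 (fun u' u => rhoE _ _ (conj x_ge0 x_sum) u' u).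
  by split; [exact: flow0 | right].
- have [nash flow0] := excess_rest (mass_gt0 c) mu_ge0 mu_le x_ge0 x_sum agg_flow_eq0
    tau_lip tau_ge0 tau_acute (fun u v => rhoE _ _ (conj x_ge0 x_sum) u v).
  by split; [exact: flow0 | left].
- have [nash flow0] := pairwise_rest mu_ge0 mu_le x_ge0 agg_flow_eq0
    (rho_ge0 _ _ x_ge0) (rho_gt0 _ _ x_ge0).
  by split; [exact: flow0 | left].
Qed.

Lemma MSNE_of_nash_classes (mu : state M) : rest_point M mu ->
  (forall c (s : St M c) (u : Pol M c), fr M mu s u = 0) ->
  (forall c, nash_class mu c) -> MSNE M mu.
Proof.
move=> [muX field0] fr0 nash; split=> // c; split=> [|s u]; first exact: nash.
by have := field0 (idx M s u); rewrite /field /= fr0 addr0.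
Qed.

End RestPoints.

Section ImitativeGrowth.
Context {R : realType} (M : model R) (c : 'I_(C M)) (vp : R -> R) (v : Pol M c).
Hypothesis st : standing M.
Hypothesis rhoE : forall pi x, pdist (mass M c) x -> forall u w,
  rho M c pi x u w = x w / mass M c * vp (pi w - pi u).
Hypothesis vp_le0 : forall d, d <= 0 -> vp d = 0.

Definition imitation_gain (nu : state M) : R :=
  (mass M c)^-1 * net_imitation vp (polmass M nu c) (F M c nu) v.

Lemma sum_field_imitative nu : inX M nu ->
  \sum_(s : St M c) field M nu (idx M s v) = polmass M nu c v * imitation_gain nu.
Proof.
move=> nuX; rewrite sum_field; last exact: phi_sum1.
rewrite sum_fr (imitative_agg_flow vp (mass M c) _ (F M c nu)) ?mulrA //.
by move=> u w; apply/rhoE/polmass_pdist.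
Qed.

Lemma polmass_is_derive (x : R -> state M) (t : R) : solution M x -> 0 < t ->
  is_derive t (1 : R) (fun r => polmass M (x r) c v)
    (polmass M (x t) c v * imitation_gain (x t)).
Proof.
move=> [xX [x_ode _]] t_gt0; rewrite -sum_field_imitative; last exact/xX/ltW.
by rewrite /polmass /mu_at; apply: is_derive_big => s; apply: x_ode.
Qed.

(* Nobody revises away from v when everybody plays v, so Lipschitz continuity
   of rho in the policy distribution bounds the outflow rate of v. *)
Lemma polmass_rate_ge : revision_protocol (rho M c) -> exists2 B : R, 0 <= B &
  forall nu, inX M nu -> - (B * polmass M nu c v) <= polmass M nu c v * imitation_gain nu.
Proof.
move=> [[L rho_lip] rho_ge0]; set m := mass M c.
have m_gt0 : 0 < m := mass_gt0 M st c.
exists (#|Pol M c|%:R * (`|L| * (2 * m))); first by rewrite !mulr_ge0 //; lra.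
move=> nu nuX; rewrite -sum_field_imitative // sum_field ?sum_fr; last exact: phi_sum1.
set x := polmass M nu c; set pi := F M c nu.
have [x_ge0 x_sum] := polmass_pdist M nu c nuX; rewrite -/m in x_sum.
set e := fun w : Pol M c => m * (w == v)%:R.
have e_pdist : pdist m e.
  split=> [w|]; first by rewrite mulr_ge0 //; lra.
  by rewrite -(sum_mul_delta (fun=> m) v) /e; under eq_bigr do rewrite mulrC.
have rho_e u' : rho M c pi e v u' = 0.
  rewrite rhoE // /e; have [->|neq] := eqVneq u' v; first by rewrite subrr vp_le0 // mulr0.
  by rewrite mulr0 !mul0r.
have xe_le : l1dist x e <= 2 * m.
  apply: le_trans (_ : \sum_w (x w + e w) <= _).
    apply: ler_sum => w _; apply: le_trans (ler_normB _ _) _.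
    by rewrite !ger0_norm // (proj1 e_pdist).
  by rewrite big_split /= x_sum (proj2 e_pdist); lra.
have rho_le u' : rho M c pi x v u' <= `|L| * (2 * m).
  have := rho_lip pi pi x e x_ge0 (proj1 e_pdist) v u'.
  rewrite rho_e subr0 /l1dist big1 ?add0r => [|w _]; last by rewrite subrr normr0.
  move=> /(le_trans (ler_norm _)) /le_trans; apply.
  apply: le_trans (ler_wpM2r _ (ler_norm L)) (ler_wpM2l _ xe_le) => //.
  exact: sumr_ge0.
have out_le : \sum_u' rho M c pi x v u' <= #|Pol M c|%:R * (`|L| * (2 * m)).
  apply: le_trans (ler_sum _ (fun u' _ => rho_le u')) _.
  by rewrite sumr_const cardT -cardE [X in _ <= X]mulr_natl.
have in_ge0 : 0 <= \sum_u' x u' * rho M c pi x u' v.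
  by apply: sumr_ge0 => u' _; rewrite mulr_ge0 ?rho_ge0.
have := ler_wpM2l (x_ge0 v) out_le; rewrite -/x; lra.
Qed.

(* Gronwall: [polmass * expR (B t)] is nondecreasing. *)
Lemma polmass_gt0_persists (x : R -> state M) (a B : R) : solution M x -> 0 < a ->
  (forall nu, inX M nu ->
     - (B * polmass M nu c v) <= polmass M nu c v * imitation_gain nu) ->
  0 < polmass M (x a) c v -> forall t, a <= t -> 0 < polmass M (x t) c v.
Proof.
move=> x_sol a_gt0 rate_ge Xa_gt0 t le_at.
set X := fun r => polmass M (x r) c v; set E := fun r : R => expR (B * r).
have E_derive r : is_derive r (1 : R) E (expR (B * r) * B).
  apply: (is_derive1_comp (f := expR) (g := fun r => B * r)).
  by rewrite -[X in is_derive _ _ _ X]mulr1; apply: is_deriveZ.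
have XE_mono : (X * E) a <= (X * E) t.
  rewrite -subr_ge0 -[X in X <= _](mul0r (t - a)).
  apply: (increment_ge (X * E)
    (fun r => X r *: (expR (B * r) * B) + E r *: (X r * imitation_gain (x r))) a t 0 le_at).
    move=> s /andP[le_as _]; apply: is_deriveM (E_derive s).
    by apply: (polmass_is_derive x s x_sol); lra.
  move=> s /andP[le_as _].
  have := rate_ge _ (proj1 x_sol s (ltW (lt_le_trans a_gt0 le_as))).
  rewrite /GRing.scale /= -/(X s) /E; have := expR_gt0 (B * s); nra.
have : 0 < X t * E t by apply: lt_le_trans XE_mono; rewrite /= mulr_gt0 ?expR_gt0.
by rewrite pmulr_lgt0 ?expR_gt0.
Qed.

Lemma polmass_escapes (x : R -> state M) (a K Bd : R) : solution M x -> 0 < a -> 0 < K ->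
  (forall t, a <= t -> K <= imitation_gain (x t)) ->
  (forall t, a <= t -> polmass M (x t) c v <= Bd) ->
  0 < polmass M (x a) c v -> False.
Proof.
move=> x_sol a_gt0 K_gt0 gain_ge X_le Xa_gt0.
set X := fun r => polmass M (x r) c v.
have {}X_le t : a <= t -> X t <= Bd := X_le t.
have X_ge0 t : a <= t -> 0 <= X t.
  by move=> le_at; apply/polmass_ge0/(proj1 x_sol); lra.
have X_derive t : a <= t -> is_derive t (1 : R) X (X t * imitation_gain (x t)).
  by move=> le_at; apply: (polmass_is_derive x t x_sol); lra.
have X_mono t : a <= t -> X a <= X t.
  move=> le_at; rewrite -subr_ge0 -[X in X <= _](mul0r (t - a)).
  apply: increment_ge le_at _ _ => [s /andP[le_as _]|s /andP[le_as _]]; first exact: X_derive.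
  by rewrite mulr_ge0 ?X_ge0 // (le_trans (ltW K_gt0)) ?gain_ge.
have X_lin t : a <= t -> K * X a * (t - a) <= X t - X a.
  move=> le_at; apply: increment_ge le_at _ _ => [s /andP[le_as _]|s /andP[le_as _]].
    exact: X_derive.
  have := X_mono s le_as; have := gain_ge s le_as; have := X_ge0 a (lexx a); nra.
have KX_gt0 : 0 < K * X a by rewrite mulr_gt0.
set t := a + (Bd - X a + 1) / (K * X a).
have le_at : a <= t by rewrite lerDl divr_ge0 ?(ltW KX_gt0) //; have := X_le a (lexx a); lra.
have t_sub : t - a = (Bd - X a + 1) / (K * X a) by rewrite /t addrC addKr.
have := X_lin t le_at; have := X_le t le_at.
by rewrite t_sub mulrC divfK ?gt_eqF //; lra.
Qed.

End ImitativeGrowth.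

Section MassTransfer.
Context {R : realType} (M : model R).

Definition move_mass (mu : state M) (i j : Idx (St M) (Pol M)) (eta : R) : state M :=
  fun k => mu k + eta * ((k == j)%:R - (k == i)%:R).

Lemma move_mass_inX mu c (s s' : St M c) (u u' : Pol M c) eta :
  inX M mu -> 0 <= eta <= mu_at M mu s u -> inX M (move_mass mu (idx M s u) (idx M s' u') eta).
Proof.
move=> [mu_ge0 mu_sum] /andP[eta_ge0 eta_le]; split=> [k|c'].
  rewrite /move_mass; have [->|ki] := eqVneq k (idx M s u).
    by case: eqP => _; rewrite /= ?subrr ?mulr0 ?addr0 ?mu_ge0 // sub0r mulrN1 subr_ge0.
  by rewrite subr0 addr_ge0 ?mulr_ge0 ?mu_ge0.
rewrite /mu_at /move_mass.
under eq_bigr do rewrite big_split /=; rewrite big_split /= mu_sum.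
under eq_bigr do rewrite -mulr_sumr sumrB.
by rewrite -mulr_sumr sumrB !sum_idx_delta subrr mulr0 addr0.
Qed.

Lemma move_mass_close mu i j eta d : 0 <= eta < d ->
  Defs.close M (move_mass mu i j eta) mu d.
Proof.
move=> /andP[eta_ge0 eta_lt] k; rewrite /move_mass addrAC subrr add0r normrM.
rewrite (ger0_norm eta_ge0); apply: le_lt_trans eta_lt.
rewrite ler_piMr //.
by case: eqP; case: eqP; rewrite ?subrr ?subr0 ?sub0r ?normrN ?normr0 ?normr1.
Qed.

End MassTransfer.

Section EscapeFromRest.
Context {R : realType} {M : model R} {c : 'I_(C M)} {vp : R -> R} {v : Pol M c}
  {mu_star : state M}.
Hypothesis st : standing M.
Hypothesis rhoE : forall pi x, pdist (mass M c) x -> forall u w,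
  rho M c pi x u w = x w / mass M c * vp (pi w - pi u).
Hypothesis vp_le0 : forall d, d <= 0 -> vp d = 0.
Hypothesis vp_lip : real_lipschitz vp.
Hypothesis mu_star_X : inX M mu_star.
Hypothesis v_unused : polmass M mu_star c v = 0.
Hypothesis gain_gt0 : 0 < imitation_gain M c vp v mu_star.

Lemma imitation_gain_cont_at : cont_at (imitation_gain M c vp v) mu_star.
Proof.
have [N [N_open [X_N F_C1]]] : F_C1_near_X M by case: st => _ [_ [_ [_ [_ [_ []]]]]].
have F_cont u : cont_at (fun nu => F M c nu u) mu_star.
  exact: C1_cont_at N_open (X_N _ mu_star_X) (F_C1 c u).
have [L vpL] := vp_lip.
have vp_cont u u' : cont_at (fun nu => vp (F M c nu u - F M c nu u')) mu_star.
  by apply: (cont_at_lipschitz vp L) vpL _; apply: cont_at_sub.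
apply: cont_at_mul (cont_at_cst _ _) _; apply: cont_at_sum => u'.
apply: cont_at_mul; last exact: cont_at_sub.
by rewrite /polmass /mu_at; apply: cont_at_sum => s; apply: cont_at_coord.
Qed.

(* Near mu_star the gain stays above half its value while the mass of v stays
   small, which contradicts [polmass_escapes]. *)
Lemma no_trap_near_rest : exists2 dl : R, 0 < dl & forall x, solution M x ->
  forall a, 0 < a -> 0 < polmass M (x a) c v ->
  ~ (forall t, a <= t -> Defs.close M (x t) mu_star dl).
Proof.
have K_gt0 : 0 < imitation_gain M c vp v mu_star / 2 by rewrite divr_gt0.
have [dl dl_gt0 gain_near] := imitation_gain_cont_at _ K_gt0.
exists dl => // x x_sol a a_gt0 Xa_gt0 trapped.
apply: (@polmass_escapes _ M c vp v st rhoE x a _ (#|St M c|%:R * dl)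
  x_sol a_gt0 K_gt0 _ _ Xa_gt0)
  => t le_at.
  by have /ltr_normlP[] := gain_near _ (trapped t le_at); lra.
apply: le_trans (_ : \sum_(s : St M c) dl <= _); last first.
  by rewrite sumr_const cardT -cardE [X in _ <= X]mulr_natl.
apply: ler_sum => s _; have /ltr_normlP[_] := trapped t le_at (idx M s v).
have := mu_at_eq0 M mu_star c s v mu_star_X v_unused; rewrite /mu_at => ->.
by rewrite subr0 => /ltW.
Qed.

Lemma polmass_gt0_soon (x : R -> state M) (s : St M c) : solution M x ->
  0 < x 0 (idx M s v) -> exists2 a : R, 0 < a & 0 < polmass M (x a) c v.
Proof.
move=> x_sol x0_gt0; have [xX [_ x_rcont]] := x_sol.
have [d d_gt0 x_near] : exists2 d : R, 0 < d &
    forall t, 0 <= t -> t < d -> Defs.close M (x t) (x 0) (x 0 (idx M s v) / 2).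
  by have [d [d_gt0 x_near]] := x_rcont _ (divr_gt0 x0_gt0 (ltr0Sn _ 1)); exists d.
have d2_gt0 : 0 < d / 2 by rewrite divr_gt0.
have d2_lt : d / 2 < d by lra.
exists (d / 2) => //; apply: lt_le_trans (mu_at_le_polmass M _ c s v (xX _ (ltW d2_gt0))).
have /ltr_normlP[] := x_near _ (ltW d2_gt0) d2_lt (idx M s v).
rewrite /mu_at; lra.
Qed.

Lemma rest_not_lyapunov_stable (s : St M c) (u : Pol M c) :
  well_posed M -> 0 < mu_at M mu_star s u -> ~ lyapunov_stable M mu_star.
Proof.
move=> [sol_exists _] mu_su_gt0 stable.
have [dl dl_gt0 no_trap] := no_trap_near_rest.
have [d [d_gt0 stay]] := stable _ dl_gt0.
set eta := Num.min (mu_at M mu_star s u) (d / 2).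
have eta_gt0 : 0 < eta by rewrite lt_min mu_su_gt0 divr_gt0.
have eta_le : eta <= mu_at M mu_star s u by rewrite ge_min lexx.
have eta_lt : eta < d by rewrite gt_min; apply/orP; right; lra.
set mu0 := move_mass M mu_star (idx M s u) (idx M s v) eta.
have mu0X : inX M mu0 by apply: move_mass_inX; rewrite ?(ltW eta_gt0).
have [x [x_sol x0]] := sol_exists _ mu0X.
have mu_sv0 : mu_star (idx M s v) = 0 := mu_at_eq0 M mu_star c s v mu_star_X v_unused.
have x0_v : x 0 (idx M s v) = eta.
  have vu : v != u by apply: contraTneq mu_su_gt0 => <-; rewrite /mu_at mu_sv0 ltxx.
  have idx_vu : (idx M s v == idx M s u) = false.
    rewrite (@eq_Tagged _ (fun c => SU (St M) (Pol M) c) (idx M s v) (s, u)) /=.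
    by rewrite xpair_eqE eqxx (negbTE vu).
  by rewrite x0 /mu0 /move_mass eqxx idx_vu mu_sv0 subr0 mulr1 add0r.
have x0v_gt0 : 0 < x 0 (idx M s v) by rewrite x0_v.
have [a a_gt0 Xa_gt0] := polmass_gt0_soon x s x_sol x0v_gt0.
apply: (no_trap x x_sol a a_gt0 Xa_gt0) => t le_at.
apply: stay x_sol _ _ (ltW (lt_le_trans a_gt0 le_at)).
by rewrite x0; apply: move_mass_close; rewrite ltW.
Qed.

Lemma rest_not_attracting (s : St M c) (x : R -> state M) : revision_protocol (rho M c) ->
  solution M x -> interiorX M (x 0) -> ~ converges_to M x mu_star.
Proof.
move=> rho_prot x_sol [_ x0_gt0] conv.
have [dl dl_gt0 no_trap] := no_trap_near_rest.
have [B _ rate_ge] := polmass_rate_ge M c vp v st rhoE vp_le0 rho_prot.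
have [a0 a0_gt0 Xa0_gt0] := polmass_gt0_soon x s x_sol (x0_gt0 _).
have [T conv_T] := conv _ dl_gt0.
have a0_le : a0 <= Num.max T a0 by rewrite le_max lexx orbT.
apply: (no_trap x x_sol (Num.max T a0)) => [||t le_at]; first exact: lt_le_trans a0_gt0 a0_le.
  exact: polmass_gt0_persists x_sol a0_gt0 rate_ge Xa0_gt0 _ a0_le.
by apply: conv_T; apply: le_trans le_at; rewrite le_max lexx.
Qed.

End EscapeFromRest.


Theorem theorem1 (R : realType) (M : model R) (mu_star : state M) :
  standing M ->
  well_posed M ->
  (forall c, revision_protocol (rho M c)) ->
  (forall c, imitative_via_comparison (mass M c) (rho M c) \/
             excess_payoff (mass M c) (rho M c) \/
             pairwise_comparison (rho M c)) ->
  rest_point M mu_star ->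
  ~ MSNE M mu_star ->
  ~ lyapunov_stable M mu_star /\
  (forall x : R -> state M, solution M x -> interiorX M (x 0) ->
     ~ converges_to M x mu_star).
Proof.
move=> st wp prot family rest not_msne.
have class_rest c := rest_point_class M st mu_star c (prot c) (family c) rest.
have [c not_nash] : exists c, ~ nash_class M mu_star c.
  apply/existsNP => nash; apply/not_msne/MSNE_of_nash_classes => // c'.
  exact: (class_rest c').1.
have [_ [//|[[vp [vp_lip [vp_le0 [vp_gt0 [_ [_ [rhoE _]]]]]]] eq_used]]] := class_rest c.
have [x_ge0 _] := polmass_pdist M mu_star c rest.1.
have [v [u [v_unused u_used lt_uv v_max]]] := better_unused_policy x_ge0 eq_used not_nash.
have gain_gt0 : 0 < imitation_gain M c vp v mu_star.
  rewrite mulr_gt0 ?invr_gt0 ?mass_gt0 //.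
  exact: (net_imitation_gt0 _ vp_le0 vp_gt0 _ _ _ _ x_ge0 v_max u_used).
have [s mu_su_gt0] := polmass_gt0_exists M mu_star c u u_used.
split.
  exact: rest_not_lyapunov_stable st rhoE vp_lip rest.1 v_unused gain_gt0 s u wp mu_su_gt0.
move=> x; exact: rest_not_attracting st rhoE vp_le0 vp_lip rest.1 v_unused gain_gt0 s x (prot c).
Qed.
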